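(* Assume the structure is rigid. Fix $\zeta=(\xi,\eta)\in\Omega$ and let $Z(z,\zeta):=(y-\eta)-i(z)(x-\xi)$. Then $Z(\cdot,\zeta)$ is invertible in each fiber $A_z$, $z\neq\zeta$, the section $z\mapsto Z(z,\zeta)^{-1}$ is $C^1$ on $\Omega\setminus\{\zeta\}$, and \[ \partial_{\bar z}\bigl(Z(\cdot,\zeta)^{-1}\bigr)=0\quad\text{on }\Omega\setminus\{\zeta\}. \]
   Context: Let $\Omega\subset\mathbb R^2$ be open with coordinates $(x,y)$, and let $\alpha,\beta\in C^1(\Omega,\mathbb R)$ satisfy $\Delta:=4\alpha-\beta^2>0$ on $\Omega$. For $z\in\Omega$ let $A_z:=\mathbb R[X]/(X^2+\beta(z)X+\alpha(z))$ (a commutative real algebra) and let $i=i(z)$ denote the class of $X$, so $i^2+\beta i+\alpha=0$ and $\{1,i(z)\}$ is a real basis of $A_z$. An ($A$-valued) section is $f=u+v\,i$ with $u,v:\Omega\to\mathbb R$; it is $C^k$ if $u,v$ are, and sums/products of sections are taken fiberwise. In each fiber $2i+\beta$ is invertible with $(2i+\beta)^{-1}=(-\beta-2i)/\Delta$. The derivatives of the generator are the sections $i_x:=-(\alpha_x+\beta_x i)(2i+\beta)^{-1}$ and $i_y:=-(\alpha_y+\beta_y i)(2i+\beta)^{-1}$. For a $C^1$ section $f=u+vi$ set $\partial_x f:=u_x+v_x i+v\,i_x$, $\partial_y f:=u_y+v_y i+v\,i_y$, $\partial_{\bar z}f:=\tfrac12(\partial_x f+i\,\partial_y f)$. The structure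 is called rigid if $i_x+i\,i_y=0$ on $\Omega$. *)

From Stdlib Require Import Reals Lra.
From Coquelicot Require Import Coquelicot.
Open Scope R_scope.

Definition open2 (S : R -> R -> Prop) : Prop :=
  forall x y, S x y -> exists eps, 0 < eps /\
    forall x' y', Rabs (x' - x) < eps -> Rabs (y' - y) < eps -> S x' y'.

Definition dx (f : R -> R -> R) (x y : R) : R := Derive (fun t => f t y) x.
Definition dy (f : R -> R -> R) (x y : R) : R := Derive (fun t => f x t) y.

Definition C1_on (S : R -> R -> Prop) (f : R -> R -> R) : Prop :=
  forall x y, S x y ->
    continuity_2d_pt f x y /\
    ex_derive (fun t => f t y) x /\ ex_derive (fun t => f x t) y /\
    continuity_2d_pt (dx f) x y /\ continuity_2d_pt (dy f) x y.

(* An element u + v i of the fiber A_z = R[X]/(X^2 + b X + a) is the pair (u,v). *)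
Definition Afib := (R * R)%type.
Definition oneA : Afib := (1, 0).
Definition Ai : Afib := (0, 1).
Definition addA (p q : Afib) : Afib := (fst p + fst q, snd p + snd q).
Definition sclA (c : R) (p : Afib) : Afib := (c * fst p, c * snd p).
(* multiplication in the fiber with parameters a = alpha(z), b = beta(z):
   i^2 = - b i - a *)
Definition mulA (a b : R) (p q : Afib) : Afib :=
  (fst p * fst q - a * (snd p * snd q),
   fst p * snd q + snd p * fst q - b * (snd p * snd q)).

(* (2i + beta)^{-1} = (-beta - 2i)/Delta *)
Definition inv2ib (a b : R) : Afib := sclA (/ (4 * a - b ^ 2)) (- b, -2).

Definition i_x (al be : R -> R -> R) (x y : R) : Afib :=
  let a := al x y in let b := be x y in
  sclA (-1) (mulA a b (dx al x y, dx be x y) (inv2ib a b)).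
Definition i_y (al be : R -> R -> R) (x y : R) : Afib :=
  let a := al x y in let b := be x y in
  sclA (-1) (mulA a b (dy al x y, dy be x y) (inv2ib a b)).

Definition dX (al be u v : R -> R -> R) (x y : R) : Afib :=
  addA (dx u x y, dx v x y) (sclA (v x y) (i_x al be x y)).
Definition dY (al be u v : R -> R -> R) (x y : R) : Afib :=
  addA (dy u x y, dy v x y) (sclA (v x y) (i_y al be x y)).
Definition dbar (al be u v : R -> R -> R) (x y : R) : Afib :=
  sclA (/ 2) (addA (dX al be u v x y)
                   (mulA (al x y) (be x y) Ai (dY al be u v x y))).

Definition rigid (Om : R -> R -> Prop) (al be : R -> R -> R) : Prop :=
  forall x y, Om x y ->
    addA (i_x al be x y) (mulA (al x y) (be x y) Ai (i_y al be x y)) = (0, 0).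

Definition Zc (xi eta x y : R) : Afib := (y - eta, - (x - xi)).

(** The inverse of [Z = s - t i] in the fibre is [(s + b t + t i) / N] with
    [N = s^2 + b s t + a t^2], the norm form of [A_z]; it is positive away from
    [(s, t) = (0, 0)] because [4 a - b^2 > 0].  For the Cauchy-Riemann equation, differentiate [Z^-1 Z = 1]
    with the Leibniz rule of the fibre product (which holds because [i_x], [i_y]
    are the derivatives of the root [i] of [X^2 + b X + a]): this yields
    [dbar(Z^-1) Z = - Z^-1 dbar Z], and [dbar Z = -(x - xi)/2 (i_x + i i_y)]
    vanishes by rigidity. *)
From Stdlib Require Import Reals Lra.
From Coquelicot Require Import Coquelicot.
Open Scope R_scope.

Definition zc_norm (a b s t : R) : R := s * s + b * s * t + a * t * t.

Definition zc_norm_deriv (a b a' b' s t s' t' : R) : R :=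
  2 * s * s' + b' * s * t + b * s' * t + b * s * t' + a' * t * t + 2 * a * t * t'.

Definition zinv (a b s t : R) : Afib := sclA (/ zc_norm a b s t) (s + b * t, t).

(* The derivative of [zinv] along a path whose data [a, b, s, t] have
   derivatives [a', b', s', t'] (quotient rule). *)
Definition zinv_deriv (a b a' b' s t s' t' : R) : Afib :=
  addA (sclA (/ zc_norm a b s t) (s' + b' * t + b * t', t'))
       (sclA (- zc_norm_deriv a b a' b' s t s' t' / zc_norm a b s t ^ 2) (s + b * t, t)).

(* At a point, [i_deriv a b a' b'] and [sec_deriv a b a' b' f f'] are [i_x] and
   [dX] (or [i_y] and [dY]), with [a', b'] the partial derivatives of alpha and
   beta and [f'] those of the components of [f]. *)
Definition i_deriv (a b a' b' : R) : Afib := sclA (-1) (mulA a b (a', b') (inv2ib a b)).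

Definition sec_deriv (a b a' b' : R) (f f' : Afib) : Afib :=
  addA f' (sclA (snd f) (i_deriv a b a' b')).

Lemma mulA_comm a b p q : mulA a b p q = mulA a b q p.
Proof. destruct p, q; unfold mulA; simpl; f_equal; ring. Qed.

Lemma mulA_assoc a b p q r : mulA a b p (mulA a b q r) = mulA a b (mulA a b p q) r.
Proof. destruct p, q, r; unfold mulA; simpl; f_equal; ring. Qed.

Lemma mulA_oneA a b p : mulA a b p oneA = p.
Proof. destruct p; unfold mulA, oneA; simpl; f_equal; ring. Qed.

Lemma mulA_eq0_of_unit a b p q q' :
  mulA a b q q' = oneA -> mulA a b p q = (0, 0) -> p = (0, 0).
Proof.
  intros Hq Hpq.
  rewrite <- (mulA_oneA a b p), <- Hq, mulA_assoc, Hpq.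
  unfold mulA; simpl; f_equal; ring.
Qed.

Lemma zc_norm_pos a b s t : 4 * a - b ^ 2 > 0 -> (s, t) <> (0, 0) -> zc_norm a b s t > 0.
Proof.
  intros HD Hst; unfold zc_norm.
  destruct (Req_dec t 0) as [-> | Ht].
  - assert (Hs : s <> 0) by (intros ->; apply Hst; reflexivity).
    pose proof (Rsqr_pos_lt s Hs); unfold Rsqr in *; lra.
  - pose proof (Rsqr_pos_lt t Ht); unfold Rsqr in *.
    replace (s * s + b * s * t + a * t * t)
      with ((s + b * t / 2) ^ 2 + (4 * a - b ^ 2) / 4 * (t * t)) by field.
    pose proof (pow2_ge_0 (s + b * t / 2)).
    assert (0 < (4 * a - b ^ 2) / 4 * (t * t)) by (apply Rmult_lt_0_compat; lra).
    lra.
Qed.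

Lemma mulA_zinv a b s t : zc_norm a b s t <> 0 -> mulA a b (zinv a b s t) (s, - t) = oneA.
Proof. intros HN; unfold mulA, zinv, sclA, oneA, zc_norm in *; simpl; f_equal; field; auto. Qed.

(* The derivative of [zinv] along any path is compatible with [Z^-1 Z = 1]
   under the Leibniz rule of the fibre product. *)
Lemma sec_deriv_zinv_leibniz a b a' b' s t s' t' :
  4 * a - b ^ 2 <> 0 -> zc_norm a b s t <> 0 ->
  addA (mulA a b (sec_deriv a b a' b' (zinv a b s t) (zinv_deriv a b a' b' s t s' t')) (s, - t))
       (mulA a b (zinv a b s t) (sec_deriv a b a' b' (s, - t) (s', - t'))) = (0, 0).
Proof.
  intros HD HN.
  assert (HD' : 4 * a - b * b <> 0) by (intro; apply HD; lra).
  unfold sec_deriv, i_deriv, zinv, zinv_deriv, zc_norm_deriv, mulA, addA, sclA, inv2ib.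
  unfold zc_norm in *; simpl; f_equal; field; auto.
Qed.

Lemma dbar_Z a b ax bx ay by_ s t :
  addA (sec_deriv a b ax bx (s, - t) (0, -1)) (mulA a b Ai (sec_deriv a b ay by_ (s, - t) (1, 0)))
  = sclA (- t) (addA (i_deriv a b ax bx) (mulA a b Ai (i_deriv a b ay by_))).
Proof.
  unfold sec_deriv; generalize (i_deriv a b ax bx) (i_deriv a b ay by_); intros [] [].
  unfold addA, sclA, mulA, Ai; simpl; f_equal; ring.
Qed.

Lemma mulA_dbar_of_leibniz a b f g P Q P' Q' :
  addA (mulA a b P g) (mulA a b f P') = (0, 0) ->
  addA (mulA a b Q g) (mulA a b f Q') = (0, 0) ->
  mulA a b (sclA (/ 2) (addA P (mulA a b Ai Q))) g
  = sclA (- / 2) (mulA a b f (addA P' (mulA a b Ai Q'))).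
Proof.
  intros H1 H2.
  transitivity (addA (sclA (- / 2) (mulA a b f (addA P' (mulA a b Ai Q'))))
    (sclA (/ 2) (addA (addA (mulA a b P g) (mulA a b f P'))
                      (mulA a b Ai (addA (mulA a b Q g) (mulA a b f Q')))))).
  - destruct f, g, P, Q, P', Q'; unfold addA, sclA, mulA, Ai; simpl; f_equal; ring.
  - rewrite H1, H2; unfold addA, sclA, mulA, Ai; simpl; f_equal; ring.
Qed.

Lemma dbar_zinv a b ax bx ay by_ s t :
  4 * a - b ^ 2 > 0 -> (s, t) <> (0, 0) ->
  addA (i_deriv a b ax bx) (mulA a b Ai (i_deriv a b ay by_)) = (0, 0) ->
  sclA (/ 2) (addA (sec_deriv a b ax bx (zinv a b s t) (zinv_deriv a b ax bx s t 0 1))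
                   (mulA a b Ai (sec_deriv a b ay by_ (zinv a b s t) (zinv_deriv a b ay by_ s t 1 0))))
  = (0, 0).
Proof.
  intros HD Hst Hrigid.
  assert (HN : zc_norm a b s t <> 0) by (apply Rgt_not_eq, zc_norm_pos; auto).
  assert (HD' : 4 * a - b ^ 2 <> 0) by lra.
  apply (mulA_eq0_of_unit a b _ (s, - t) (zinv a b s t)).
  { rewrite mulA_comm; apply mulA_zinv; exact HN. }
  rewrite (mulA_dbar_of_leibniz a b (zinv a b s t) (s, - t) _ _
             (sec_deriv a b ax bx (s, - t) (0, -1)) (sec_deriv a b ay by_ (s, - t) (1, 0))).
  - rewrite dbar_Z, Hrigid; unfold mulA, sclA; simpl; f_equal; ring.
  - exact (sec_deriv_zinv_leibniz a b ax bx s t 0 1 HD' HN).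
  - pose proof (sec_deriv_zinv_leibniz a b ay by_ s t 1 0 HD' HN) as H.
    rewrite Ropp_0 in H; exact H.
Qed.

Lemma is_derive_zinv (a b s t : R -> R) (a' b' s' t' r : R) :
  is_derive a r a' -> is_derive b r b' -> is_derive s r s' -> is_derive t r t' ->
  zc_norm (a r) (b r) (s r) (t r) <> 0 ->
  is_derive (fun r => fst (zinv (a r) (b r) (s r) (t r))) r
    (fst (zinv_deriv (a r) (b r) a' b' (s r) (t r) s' t')) /\
  is_derive (fun r => snd (zinv (a r) (b r) (s r) (t r))) r
    (snd (zinv_deriv (a r) (b r) a' b' (s r) (t r) s' t')).
Proof.
  intros Ha Hb Hs Ht HN.
  rewrite <- (is_derive_unique _ _ _ Ha), <- (is_derive_unique _ _ _ Hb),
    <- (is_derive_unique _ _ _ Hs), <- (is_derive_unique _ _ _ Ht).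
  unfold zinv, zinv_deriv, zc_norm_deriv, sclA, addA; unfold zc_norm in *; simpl.
  split; (auto_derive; [repeat split; auto; eexists; eassumption | ]).
  all: change (fun x => a x) with a; change (fun x => b x) with b;
    change (fun x => s x) with s; change (fun x => t x) with t; field; auto.
Qed.

Ltac continuity_2d :=
  unfold Rdiv; repeat first
    [ apply continuity_2d_pt_plus | apply continuity_2d_pt_minus
    | apply continuity_2d_pt_mult | apply continuity_2d_pt_opp
    | apply continuity_2d_pt_inv | apply continuity_2d_pt_const | assumption ].

Section ZinvContinuity.

Variables a b s t : R -> R -> R.
Variables x y : R.
Hypotheses (Ha : continuity_2d_pt a x y) (Hb : continuity_2d_pt b x y)
  (Hs : continuity_2d_pt s x y) (Ht : continuity_2d_pt t x y).
Hypothesis HN : zc_norm (a x y) (b x y) (s x y) (t x y) <> 0.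

Lemma continuity_2d_pt_zinv :
  continuity_2d_pt (fun x y => fst (zinv (a x y) (b x y) (s x y) (t x y))) x y /\
  continuity_2d_pt (fun x y => snd (zinv (a x y) (b x y) (s x y) (t x y))) x y.
Proof. unfold zinv, sclA; unfold zc_norm in HN; simpl; split; continuity_2d. Qed.

Lemma continuity_2d_pt_zinv_deriv (a' b' : R -> R -> R) (s' t' : R) :
  continuity_2d_pt a' x y -> continuity_2d_pt b' x y ->
  continuity_2d_pt (fun x y => fst (zinv_deriv (a x y) (b x y) (a' x y) (b' x y) (s x y) (t x y) s' t')) x y /\
  continuity_2d_pt (fun x y => snd (zinv_deriv (a x y) (b x y) (a' x y) (b' x y) (s x y) (t x y) s' t')) x y.
Proof.
  intros Ha' Hb'.
  unfold zinv_deriv, zc_norm_deriv, sclA, addA; unfold zc_norm in HN; simpl.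
  split; continuity_2d; apply Rmult_integral_contrapositive; auto.
Qed.

End ZinvContinuity.

Lemma locally_2d_of_open2 (S : R -> R -> Prop) x y : open2 S -> S x y -> locally_2d S x y.
Proof.
  intros HS Sxy; destruct (HS x y Sxy) as [e [He HE]].
  exists (mkposreal e He); simpl; auto.
Qed.

Lemma open2_punctured (S : R -> R -> Prop) xi eta :
  open2 S -> open2 (fun x y => S x y /\ (x, y) <> (xi, eta)).
Proof.
  intros HS x y [Sxy Hne].
  destruct (HS x y Sxy) as [e [He HE]].
  set (d := Rmax (Rabs (x - xi)) (Rabs (y - eta))).
  assert (Hd : 0 < d).
  { destruct (Req_dec x xi) as [-> | Hx].
    - assert (y <> eta) by (intros ->; auto).
      apply Rlt_le_trans with (Rabs (y - eta)); [apply Rabs_pos_lt; lra | apply Rmax_r].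
    - apply Rlt_le_trans with (Rabs (x - xi)); [apply Rabs_pos_lt; lra | apply Rmax_l]. }
  exists (Rmin e d); split; [now apply Rmin_glb_lt |].
  intros x' y' Hx' Hy'.
  pose proof (Rmin_l e d); pose proof (Rmin_r e d).
  split; [apply HE; lra |].
  intros Heq; injection Heq as -> ->.
  assert (Hlt : d < Rmin e d).
  { apply Rmax_lub_lt; rewrite Rabs_minus_sym; assumption. }
  lra.
Qed.

Lemma C1_on_of_is_derive (S : R -> R -> Prop) (f fx fy : R -> R -> R) :
  open2 S ->
  (forall x y, S x y -> is_derive (fun t => f t y) x (fx x y)) ->
  (forall x y, S x y -> is_derive (fun t => f x t) y (fy x y)) ->
  (forall x y, S x y ->
     continuity_2d_pt f x y /\ continuity_2d_pt fx x y /\ continuity_2d_pt fy x y) ->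
  C1_on S f.
Proof.
  intros HS Hx Hy Hc x y Sxy.
  destruct (Hc x y Sxy) as (Cf & Cfx & Cfy).
  destruct (locally_2d_of_open2 S x y HS Sxy) as [d Hd].
  repeat split; [exact Cf | eexists; now apply Hx | eexists; now apply Hy | |].
  - apply continuity_2d_pt_ext_loc with fx; auto.
    exists d; intros u v Hu Hv; symmetry; apply is_derive_unique, Hx, Hd; auto.
  - apply continuity_2d_pt_ext_loc with fy; auto.
    exists d; intros u v Hu Hv; symmetry; apply is_derive_unique, Hy, Hd; auto.
Qed.

Section ZinvAt.

Variables (Om : R -> R -> Prop) (al be : R -> R -> R) (xi eta : R).
Hypotheses (HOm : open2 Om) (Hal : C1_on Om al) (Hbe : C1_on Om be)
  (Hpos : forall x y, Om x y -> 4 * al x y - be x y ^ 2 > 0).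

Definition punctured (x y : R) : Prop := Om x y /\ (x, y) <> (xi, eta).

Definition zinv_at (x y : R) : Afib := zinv (al x y) (be x y) (y - eta) (x - xi).

Definition zinv_dx (x y : R) : Afib :=
  zinv_deriv (al x y) (be x y) (dx al x y) (dx be x y) (y - eta) (x - xi) 0 1.

Definition zinv_dy (x y : R) : Afib :=
  zinv_deriv (al x y) (be x y) (dy al x y) (dy be x y) (y - eta) (x - xi) 1 0.

Lemma punctured_shift_neq0 x y : punctured x y -> (y - eta, x - xi) <> (0, 0).
Proof. intros [_ Hne] E; injection E as Ey Ex; apply Hne; f_equal; lra. Qed.

Lemma zc_norm_at_neq0 x y :
  punctured x y -> zc_norm (al x y) (be x y) (y - eta) (x - xi) <> 0.
Proof.
  intros Hxy; apply Rgt_not_eq, zc_norm_pos.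
  - apply Hpos, Hxy.
  - apply punctured_shift_neq0, Hxy.
Qed.

Lemma is_derive_zinv_at_x x y : punctured x y ->
  is_derive (fun t => fst (zinv_at t y)) x (fst (zinv_dx x y)) /\
  is_derive (fun t => snd (zinv_at t y)) x (snd (zinv_dx x y)).
Proof.
  intros Hxy.
  destruct (Hal x y (proj1 Hxy)) as (_ & Hax & _), (Hbe x y (proj1 Hxy)) as (_ & Hbx & _).
  apply (is_derive_zinv (fun t => al t y) (fun t => be t y) (fun _ => y - eta) (fun t => t - xi)).
  - apply Derive_correct, Hax.
  - apply Derive_correct, Hbx.
  - now auto_derive.
  - auto_derive; auto; ring.
  - apply zc_norm_at_neq0, Hxy.
Qed.

Lemma is_derive_zinv_at_y x y : punctured x y ->
  is_derive (fun t => fst (zinv_at x t)) y (fst (zinv_dy x y)) /\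
  is_derive (fun t => snd (zinv_at x t)) y (snd (zinv_dy x y)).
Proof.
  intros Hxy.
  destruct (Hal x y (proj1 Hxy)) as (_ & _ & Hay & _), (Hbe x y (proj1 Hxy)) as (_ & _ & Hby & _).
  apply (is_derive_zinv (fun t => al x t) (fun t => be x t) (fun t => t - eta) (fun _ => x - xi)).
  - apply Derive_correct, Hay.
  - apply Derive_correct, Hby.
  - auto_derive; auto; ring.
  - now auto_derive.
  - apply zc_norm_at_neq0, Hxy.
Qed.

Lemma continuity_2d_pt_zinv_at x y : punctured x y ->
  (continuity_2d_pt (fun x y => fst (zinv_at x y)) x y /\
   continuity_2d_pt (fun x y => snd (zinv_at x y)) x y) /\
  (continuity_2d_pt (fun x y => fst (zinv_dx x y)) x y /\
   continuity_2d_pt (fun x y => snd (zinv_dx x y)) x y) /\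
  (continuity_2d_pt (fun x y => fst (zinv_dy x y)) x y /\
   continuity_2d_pt (fun x y => snd (zinv_dy x y)) x y).
Proof.
  intros Hxy.
  destruct (Hal x y (proj1 Hxy)) as (Ca & _ & _ & Cax & Cay).
  destruct (Hbe x y (proj1 Hxy)) as (Cb & _ & _ & Cbx & Cby).
  assert (Cs : continuity_2d_pt (fun _ y => y - eta) x y).
  { apply continuity_2d_pt_minus; [apply continuity_2d_pt_id2 | apply continuity_2d_pt_const]. }
  assert (Ct : continuity_2d_pt (fun x _ => x - xi) x y).
  { apply continuity_2d_pt_minus; [apply continuity_2d_pt_id1 | apply continuity_2d_pt_const]. }
  pose proof (zc_norm_at_neq0 x y Hxy) as HN.
  split; [| split].
  - exact (continuity_2d_pt_zinv al be _ _ x y Ca Cb Cs Ct HN).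
  - exact (continuity_2d_pt_zinv_deriv al be _ _ x y Ca Cb Cs Ct HN _ _ 0 1 Cax Cbx).
  - exact (continuity_2d_pt_zinv_deriv al be _ _ x y Ca Cb Cs Ct HN _ _ 1 0 Cay Cby).
Qed.

Lemma C1_on_zinv_at :
  C1_on punctured (fun x y => fst (zinv_at x y)) /\
  C1_on punctured (fun x y => snd (zinv_at x y)).
Proof.
  pose proof (open2_punctured Om xi eta HOm) as Hopen.
  split.
  - apply C1_on_of_is_derive with (fun x y => fst (zinv_dx x y)) (fun x y => fst (zinv_dy x y));
      [exact Hopen | apply is_derive_zinv_at_x | apply is_derive_zinv_at_y |].
    intros x y Hxy; destruct (continuity_2d_pt_zinv_at x y Hxy) as ([] & [] & []); auto.
  - apply C1_on_of_is_derive with (fun x y => snd (zinv_dx x y)) (fun x y => snd (zinv_dy x y));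
      [exact Hopen | apply is_derive_zinv_at_x | apply is_derive_zinv_at_y |].
    intros x y Hxy; destruct (continuity_2d_pt_zinv_at x y Hxy) as ([] & [] & []); auto.
Qed.

Hypothesis Hrigid : rigid Om al be.

Lemma dbar_zinv_at x y : punctured x y ->
  dbar al be (fun x y => fst (zinv_at x y)) (fun x y => snd (zinv_at x y)) x y = (0, 0).
Proof.
  intros Hxy.
  destruct (is_derive_zinv_at_x x y Hxy) as [Dux Dvx].
  destruct (is_derive_zinv_at_y x y Hxy) as [Duy Dvy].
  unfold dbar, dX, dY, dx, dy; cbv beta.
  rewrite (is_derive_unique (fun t : R => fst (zinv_at t y)) _ _ Dux),
    (is_derive_unique (fun t : R => snd (zinv_at t y)) _ _ Dvx),
    (is_derive_unique (fun t : R => fst (zinv_at x t)) _ _ Duy),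
    (is_derive_unique (fun t : R => snd (zinv_at x t)) _ _ Dvy), <- !surjective_pairing.
  exact (dbar_zinv _ _ _ _ _ _ _ _ (Hpos x y (proj1 Hxy)) (punctured_shift_neq0 x y Hxy)
           (Hrigid x y (proj1 Hxy))).
Qed.

End ZinvAt.

Theorem lemma5p5 (Om : R -> R -> Prop) (al be : R -> R -> R) (xi eta : R) :
  open2 Om ->
  C1_on Om al -> C1_on Om be ->
  (forall x y, Om x y -> 4 * al x y - be x y ^ 2 > 0) ->
  rigid Om al be ->
  Om xi eta ->
  exists u v : R -> R -> R,
    (forall x y, Om x y -> (x, y) <> (xi, eta) ->
       mulA (al x y) (be x y) (u x y, v x y) (Zc xi eta x y) = oneA) /\
    C1_on (fun x y => Om x y /\ (x, y) <> (xi, eta)) u /\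
    C1_on (fun x y => Om x y /\ (x, y) <> (xi, eta)) v /\
    (forall x y, Om x y -> (x, y) <> (xi, eta) -> dbar al be u v x y = (0, 0)).
Proof.
  intros HOm Hal Hbe Hpos Hrigid _.
  exists (fun x y => fst (zinv_at al be xi eta x y)), (fun x y => snd (zinv_at al be xi eta x y)).
  destruct (C1_on_zinv_at Om al be xi eta HOm Hal Hbe Hpos) as [C1u C1v].
  split; [| split; [| split]]; [| exact C1u | exact C1v |].
  - intros x y Hx Hne; rewrite <- surjective_pairing.
    apply mulA_zinv, (zc_norm_at_neq0 Om al be xi eta Hpos); split; assumption.
  - intros x y Hx Hne; apply (dbar_zinv_at Om); auto; split; assumption.
Qed.
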